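(* Let $A\in\mathbb{R}^{d\times d}$, $B\in\mathbb{R}^{d\times d_u}$, and suppose the controllability matrix $\mathcal{G}=[B\ AB\ \cdots\ A^dB]$ has rank $s_c<d$. Let $T$ be an invertible matrix such that $$TAT^{-1}=\begin{bmatrix}A_1&X_{12}\\0&X_2\end{bmatrix},\qquad TB=\begin{bmatrix}B_1\\0\end{bmatrix},$$ with $A_1\in\mathbb{R}^{s_c\times s_c}$, $X_{12}\in\mathbb{R}^{s_c\times(d-s_c)}$, $X_2\in\mathbb{R}^{(d-s_c)\times(d-s_c)}$, and define the relevant disturbances matrix $\mathcal{RD}=[X_{12}^\top\ \ X_2^\top X_{12}^\top\ \cdots\ (X_2^\top)^{d-s_c}X_{12}^\top]$. If $\mathrm{rank}(\mathcal{RD})=s_e$, then $L=(A,B,I_d)$ is equivalent to a PC-LQ: there is an invertible matrix $S$ such that $$SAS^{-1}=\begin{bmatrix}A_1&A_{12}&0\\0&A_2&0\\0&A_{32}&A_3\end{bmatrix},\qquad SB=\begin{bmatrix}B_1\\0\\0\end{bmatrix},$$ with $A_1\in\mathbb{R}^{s_c\times s_c}$ and $A_2\in\mathbb{R}^{s_e\times s_e}$.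
   Context: Such a transformation $T$ always exists when $\mathrm{rank}(\mathcal G)=s_c$. The paper phrases the conclusion as ''$L$ is rotationally equivalent to'' the three-block (PC-LQ) form; equivalence here means a change of state coordinates $x\mapsto Sx$. *)

From mathcomp Require Import all_boot all_order all_algebra.
From mathcomp Require Import reals.
Set Implicit Arguments. Unset Strict Implicit. Unset Printing Implicit Defensive.
Import GRing.Theory Num.Theory.
Local Open Scope ring_scope.

Definition krylov (R : pzRingType) (m p n : nat) (M : 'M[R]_m) (N : 'M[R]_(m, p)) :
    'M[R]_(m, \sum_(k < n.+1) p) :=
  \mxrow_(k < n.+1) (M ^+ k *m N).

Definition ctrb_mx (R : pzRingType) (d du : nat) (A : 'M[R]_d) (B : 'M[R]_(d, du)) :=
  krylov d A B.

Definition rd_mx (R : pzRingType) (sc e : nat) (X12 : 'M[R]_(sc, e)) (X2 : 'M[R]_e) :=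
  krylov e X2^T X12^T.

From mathcomp Require Import all_boot all_order all_algebra.
From mathcomp Require Import reals.
Set Implicit Arguments. Unset Strict Implicit. Unset Printing Implicit Defensive.
Import GRing.Theory Num.Theory.
Local Open Scope ring_scope.

(** The row space of [RD^T] is the Krylov space [V] spanned by the rows of
    the [X12 *m X2 ^+ i]; by Cayley-Hamilton it contains every [X12 *m X2 ^+ k],
    so it contains the rows of [X12] and is [X2]-stable.  Completing a basis of
    [V] to an invertible [P] and changing coordinates by [diag(1, P)] on top of
    [T] turns [X12] into [[A12 0]] and [X2] into a block lower-triangular
    matrix, while leaving [[B1; 0]] unchanged. *)

Lemma trmxX (R : comPzRingType) n (M : 'M[R]_n) k : (M ^+ k)^T = M^T ^+ k.
Proof.
elim: k => [|k IHk]; first by rewrite !expr0 trmx1.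
by rewrite exprS -mulmxE trmx_mul IHk mulmxE -exprSr.
Qed.

Section KrylovSpace.

Variables (F : fieldType) (m n : nat) (N : 'M[F]_(m, n)) (X : 'M[F]_n).

Definition krylov_space := (\sum_(i < n.+1) <<N *m X ^+ i>>)%MS.

Lemma krylov_space_expr k : (N *m X ^+ k <= krylov_space)%MS.
Proof.
rewrite /krylov_space; case: n N X => [|n'] N' X'.
  by rewrite [N' *m _]thinmx0 sub0mx.
set cp := char_poly X'.
have cp_neq0 : cp != 0 by rewrite monic_neq0 // char_poly_monic.
have -> : X' ^+ k = horner_mx X' ('X^k %% cp).
  rewrite -{1}(horner_mx_X X') -rmorphXn /= {1}(divp_eq 'X^k cp).
  by rewrite rmorphD rmorphM /= Cayley_Hamilton mulr0 add0r.
set q := 'X^k %% cp.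
have size_q : (size q <= n'.+1)%N.
  by rewrite -ltnS -(size_char_poly X') ltn_modpN0.
rewrite -[q]coefK poly_def rmorph_sum /= mulmx_sumr.
apply: summx_sub => i _; rewrite horner_mxZ -scalemxAr; apply: scalemx_sub.
rewrite rmorphXn /= horner_mx_X.
have lt_i : (i < n'.+2)%N by apply: leq_trans (ltn_ord i) (leqW size_q).
by apply: (sumsmx_sup (Ordinal lt_i)) => //; rewrite genmxE.
Qed.

Lemma sub_krylov_space : (N <= krylov_space)%MS.
Proof. by have := krylov_space_expr 0; rewrite expr0 mulmx1. Qed.

Lemma krylov_space_stable : stablemx krylov_space X.
Proof.
rewrite sumsmxMr; apply/sumsmx_subP => i _.
by rewrite (eqmxMr _ (genmxE _)) -mulmxA mulmxE -exprSr krylov_space_expr.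
Qed.

Lemma tr_krylov : ((krylov n X^T N^T)^T :=: krylov_space)%MS.
Proof.
rewrite /krylov tr_mxrow (@eq_mxcol _ _ _ _ _ (fun i => N *m X ^+ i)).
  exact: eqmx_col.
by move=> i; rewrite trmx_mul trmxK -trmxX trmxK.
Qed.

End KrylovSpace.

Section StableSubspaceBasis.

Variables (F : fieldType) (s r : nat).

Lemma usubmx_row_ebase m (V : 'M[F]_(m, s + r)) :
  \rank V = s -> (usubmx (row_ebase V : 'M_(s + r)) :=: V)%MS.
Proof.
move=> rankV; have := eq_row_base V; rewrite /row_base rankV.
by rewrite pid_mx_row -{1}[row_ebase V]vsubmxK mul_row_col mul1mx mul0mx addr0.
Qed.

Lemma sub_usubmx_row_mx0 k n (P : 'M[F]_(s + r, n)) (Y : 'M[F]_(k, n)) :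
  (Y <= usubmx P)%MS -> exists Y1, Y = row_mx Y1 0 *m P.
Proof.
case/submxP=> Y1 ->; exists Y1.
by rewrite -[P in RHS]vsubmxK mul_row_col mul0mx addr0.
Qed.

Lemma stable_usubmx_block_lower (P X : 'M[F]_(s + r)) :
  P \in unitmx -> stablemx (usubmx P) X ->
  exists A2 A32 A3, P *m X = block_mx A2 0 A32 A3 *m P.
Proof.
move=> unitP /submxP[A2 eA2]; set Y := dsubmx P *m X *m invmx P.
exists A2, (lsubmx Y), (rsubmx Y).
rewrite -[P in LHS]vsubmxK -[P in RHS]vsubmxK mul_col_mx mul_block_col.
by rewrite mul0mx addr0 -eA2 -mul_row_col hsubmxK vsubmxK mulmxKV.
Qed.

End StableSubspaceBasis.

Lemma block_diag1_intertwine (F : fieldType) m n (A1 : 'M[F]_m)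
    (X12 Y12 : 'M[F]_(m, n)) (X2 Y2 P : 'M[F]_n) :
  X12 = Y12 *m P -> P *m X2 = Y2 *m P ->
  block_mx 1%:M 0 0 P *m block_mx A1 X12 0 X2 =
    block_mx A1 Y12 0 Y2 *m block_mx 1%:M 0 0 P.
Proof.
move=> eX12 eX2; rewrite !mulmx_block.
by rewrite !mulmx1 !mul1mx !mulmx0 !mul0mx !addr0 !add0r eX12 eX2.
Qed.

Lemma stable_subspace_block_form (F : fieldType) sc s r m
    (A1 : 'M[F]_sc) (X12 : 'M[F]_(sc, s + r)) (X2 : 'M[F]_(s + r))
    (V : 'M[F]_(m, s + r)) :
  \rank V = s -> (X12 <= V)%MS -> stablemx V X2 ->
  exists (P : 'M_(s + r)) (A12 : 'M_(sc, s)) (A2 : 'M_s) (A32 : 'M_(r, s))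
         (A3 : 'M_r),
    P \in unitmx /\
    block_mx 1%:M 0 0 P *m block_mx A1 X12 0 X2 =
      block_mx A1 (row_mx A12 0) 0 (block_mx A2 0 A32 A3) *m block_mx 1%:M 0 0 P.
Proof.
move=> rankV subX12 stableV; set P := row_ebase V.
have eqPV : (usubmx (P : 'M_(s + r)) :=: V)%MS by apply: usubmx_row_ebase.
have [A12 eX12] : exists A12, X12 = row_mx A12 0 *m P.
  by apply: sub_usubmx_row_mx0; rewrite eqPV.
have [A2 [A32 [A3 eX2]]] : exists A2 A32 A3, P *m X2 = block_mx A2 0 A32 A3 *m P.
  apply: stable_usubmx_block_lower; first exact: row_ebase_unit.
  by rewrite (eqmx_stable _ eqPV).
exists P, A12, A2, A32, A3; split; first exact: row_ebase_unit.
exact: block_diag1_intertwine.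
Qed.

Theorem proposition1 (R : realType) (d du sc e se : nat)
    (A : 'M[R]_d) (B : 'M[R]_(d, du))
    (hd : (sc + e = d)%N)
    (hrank : \rank (ctrb_mx A B) = sc) (hlt : (sc < d)%N)
    (T : 'M[R]_d) (A1 : 'M[R]_sc) (X12 : 'M[R]_(sc, e)) (X2 : 'M[R]_e)
    (B1 : 'M[R]_(sc, du)) :
  T \in unitmx ->
  T *m A *m invmx T = castmx (hd, hd) (block_mx A1 X12 0 X2) ->
  T *m B = castmx (hd, erefl du) (col_mx B1 0) ->
  \rank (rd_mx X12 X2) = se ->
  exists (r : nat) (h : (sc + (se + r) = d)%N) (S : 'M[R]_d)
         (A12 : 'M[R]_(sc, se)) (A2 : 'M[R]_se) (A32 : 'M[R]_(r, se)) (A3 : 'M[R]_r),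
    [/\ S \in unitmx,
        S *m A *m invmx S =
          castmx (h, h) (block_mx A1 (row_mx A12 0) 0 (block_mx A2 0 A32 A3))
      & S *m B = castmx (h, erefl du) (col_mx B1 0)].
Proof.
move=> unitT eTA eTB rankRD; subst d; rewrite !castmx_id in eTA eTB.
have rankV : \rank (krylov_space X12 X2) = se.
  by rewrite -(tr_krylov X12 X2) mxrank_tr.
have [r def_e] : exists r, e = (se + r)%N.
  by exists (e - se)%N; rewrite subnKC // -rankV rank_leq_col.
subst e.
have [P [A12 [A2 [A32 [A3 [unitP eD]]]]]] := stable_subspace_block_form A1
  rankV (sub_krylov_space X12 X2) (krylov_space_stable X12 X2).
set D : 'M[R]_(sc + (se + r)) := block_mx 1%:M 0 0 P.
have unitD : D \in unitmx by rewrite unitmxE det_lblock det1 mul1r -unitmxE.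
exists r, erefl, (D *m T), A12, A2, A32, A3; rewrite !castmx_id.
split.
- by rewrite unitmx_mul unitD.
- rewrite -conjumx ?unitmx_mul ?unitD // conjuMumx // [conjmx T A]conjumx // eTA.
  by rewrite conjumx // eD mulmxK.
- by rewrite -mulmxA eTB mul_block_col !mul1mx !mul0mx !mulmx0 addr0 add0r.
Qed.
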